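(* A finite transitive permutation group $G$ whose point stabilizers have order $2$ has the EKR property if (i) $G$ has a cyclic Sylow $2$-subgroup, or (ii) $G$ is a nilpotent group.
   Context: For a permutation group $G$ on a finite set $V$, a subset $\mathcal{F}\subseteq G$ is intersecting if for all $g,h\in\mathcal{F}$ there is $v\in V$ with $g(v)=h(v)$. $G$ has the Erdős–Ko–Rado (EKR) property if the maximum size of an intersecting set of $G$ equals the maximum order of a point stabilizer $G_v$, $v\in V$. *)

From mathcomp Require Import all_boot all_fingroup all_solvable.
Set Implicit Arguments. Unset Strict Implicit. Unset Printing Implicit Defensive.
Local Open Scope group_scope.

Definition intersecting (T : finType) (G : {group {perm T}})
  (F : {set {perm T}}) : Prop :=
  F \subset G /\ forall g h, g \in F -> h \in F -> exists v : T, g v = h v.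

Definition intersectingb (T : finType) (G : {group {perm T}})
  (F : {set {perm T}}) : bool :=
  (F \subset G) && [forall g in F, forall h in F, exists v : T, g v == h v].

Definition EKR (T : finType) (G : {group {perm T}}) : Prop :=
  \max_(F : {set {perm T}} | intersectingb G F) #|F|
  = \max_(v : T) #|'C_G[v | 'P]|.

Lemma intersectingP (T : finType) (G : {group {perm T}}) (F : {set {perm T}}) :
  reflect (intersecting G F) (intersectingb G F).
Proof.
apply: (iffP andP) => [[sFG /forallP H]|[sFG H]]; split=> //.
- move=> g h gF hF; have /implyP/(_ gF)/forallP/(_ h)/implyP/(_ hF) := H g.
  by case/existsP=> v /eqP; exists v.
- apply/forallP=> g; apply/implyP=> gF; apply/forallP=> h; apply/implyP=> hF.
  by have [v Ev] := H g h gF hF; apply/existsP; exists v; rewrite Ev.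
Qed.

From mathcomp Require Import all_boot all_fingroup all_solvable.
Set Implicit Arguments. Unset Strict Implicit. Unset Printing Implicit Defensive.
Local Open Scope group_scope.

(* Three elements g, h, k of an intersecting set give point-fixing elements
   a = h g^-1, b = k h^-1 and ba = k g^-1. When G is transitive with point
   stabilizers of order 2, all nontrivial point-fixing elements are conjugate
   involutions; so a and b would commute, and [a, y] = ab would be conjugate
   to a, where b = a^y. A cyclic Sylow 2-subgroup cannot contain the
   four-group <a, b>, and in a nilpotent group an element conjugate to its
   commutator [a, y] lies in every term of the lower central series. Hence
   intersecting sets have at most 2 = |G_v| elements. *)

Lemma card2_nontrivial_eq (gT : finGroupType) (H : {group gT}) a b :
  #|H| = 2 -> a \in H -> b \in H -> a != 1 -> b != 1 -> a = b.
Proof.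
move=> cardH aH bH a1 b1.
have /cards1P[c Hc] : #|H :\ 1| == 1%N.
  by move: cardH; rewrite (cardsD1 1 H) group1 add1n => -[->].
have : a \in H :\ 1 by rewrite in_setD1 a1.
have : b \in H :\ 1 by rewrite in_setD1 b1.
by rewrite Hc !in_set1 => /eqP -> /eqP ->.
Qed.

Lemma card2_invg (gT : finGroupType) (H : {group gT}) a :
  #|H| = 2 -> a \in H -> a^-1 = a.
Proof. by move=> cardH aH; apply/eqP; rewrite eq_invg_mul -expg2 -cardH expg_cardG. Qed.

Lemma nilpotent_commg_conj_eq1 (gT : finGroupType) (G : {group gT}) x y z :
  nilpotent G -> x \in G -> y \in G -> z \in G -> [~ x, y] = x ^ z -> x = 1.
Proof.
move=> nilG xG yG zG xyz.
have xL n : x \in 'L_n.+1(G).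
  elim: n => [|n IHn]; first by rewrite lcn1.
  have zN : z \in 'N('L_n.+2(G)) by apply: subsetP (lcn_norm _ _) _ zG.
  by rewrite -(memJ_norm _ zN) -xyz lcnSn mem_commg.
have [n Ln1] := lcnP _ nilG.
by apply/set1gP; rewrite -Ln1.
Qed.

Lemma cyclic_Sylow_cycle_eq (gT : finGroupType) (G P : {group gT}) p a b :
  p.-Sylow(G) P -> cyclic P -> a \in G -> b \in G -> p.-elt a -> p.-elt b ->
  commute a b -> #[a] = #[b] -> <[a]> = <[b]>.
Proof.
move=> sylP cycP aG bG pa pb cab oab.
have cAB : commute <[a]> <[b]> by apply: centC; apply: cents_cycle.
have sABG : <[a]> <*> <[b]> \subset G by rewrite join_subG !cycle_subG aG bG.
have pAB : p.-group (<[a]> <*> <[b]>) by rewrite comm_joingE // pgroupM; apply/andP.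
have [x _ sABPx] := Sylow_subJ sylP sABG pAB.
have cycAB : cyclic (<[a]> <*> <[b]>) by rewrite (cyclicS sABPx) ?cyclicJ.
by apply/eqP; rewrite (eq_subG_cyclic cycAB) ?joing_subl ?joing_subr //; apply/eqP.
Qed.

Section PermGroup.

Variables (T : finType) (G : {group {perm T}}).

Lemma perm_stabP v a : reflect (a \in G /\ a v = v) (a \in 'C_G[v | 'P]).
Proof.
by apply: (iffP setIP) => -[aG av]; split=> //; [move/astab1P: av | apply/astab1P].
Qed.

Lemma stab_intersecting v : intersecting G 'C_G[v | 'P].
Proof.
split=> [|g h /perm_stabP[_ gv] /perm_stabP[_ hv]]; first exact: subsetIl.
by exists v; rewrite gv hv.
Qed.

Lemma intersecting_divr_stab F g h : intersecting G F -> g \in F -> h \in F ->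
  exists v, h * g^-1 \in 'C_G[v | 'P].
Proof.
move=> [sFG Fi] gF hF; have [v gv] := Fi g h gF hF; exists v.
apply/perm_stabP; rewrite groupM ?groupV ?(subsetP sFG) //.
by rewrite permM -gv permK.
Qed.

Lemma EKR_of_intersecting_le_stab :
  (forall F v, intersecting G F -> #|F| <= #|'C_G[v | 'P]|) -> EKR G.
Proof.
move=> leFC; apply/eqP; rewrite eqn_leq; apply/andP; split.
- apply/bigmax_leqP => F /intersectingP Fint.
  have [-> | [g gF]] := set_0Vmem F; first by rewrite cards0.
  have [v _] := Fint.2 g g gF gF.
  exact: leq_trans (leFC F v Fint) (leq_bigmax v).
- apply/bigmax_leqP => v _.
  apply: (leq_bigmax_cond (F := fun F : {set {perm T}} => #|F|)).
  exact/intersectingP/stab_intersecting.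
Qed.

Hypothesis transG : [transitive G, on [set: T] | 'P].
Hypothesis card_stab2 : forall v, #|'C_G[v | 'P]| = 2.

Lemma stab_nontrivial_conj u w a b :
  a \in 'C_G[u | 'P] -> b \in 'C_G[w | 'P] -> a != 1 -> b != 1 ->
  exists2 y, y \in G & b = a ^ y.
Proof.
move=> aCu bCw a1 b1.
have [y yG wE] := atransP2 transG (in_setT u) (in_setT w).
exists y => //; apply: (card2_nontrivial_eq (card_stab2 w)) => //.
- have /perm_stabP[aG au] := aCu.
  by apply/perm_stabP; rewrite groupJ // wE /= conjgE !permM permK au.
- by rewrite conjg_eq1.
Qed.

Lemma stab_invg v a : a \in 'C_G[v | 'P] -> a^-1 = a.
Proof. exact: card2_invg (card_stab2 v). Qed.

Section Triangle.

Variables (u w x : T) (a b : {perm T}).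
Hypotheses (aCu : a \in 'C_G[u | 'P]) (bCw : b \in 'C_G[w | 'P]).
Hypothesis baCx : b * a \in 'C_G[x | 'P].
Hypotheses (a1 : a != 1) (b1 : b != 1) (ba1 : b * a != 1).

Lemma triangle_commute : commute a b.
Proof.
by rewrite /commute -(stab_invg baCx) invMg (stab_invg aCu) (stab_invg bCw).
Qed.

Lemma triangle_Sylow2_not_cyclic P : P \in 'Syl_2(G) -> ~~ cyclic P.
Proof.
rewrite inE => sylP; apply/negP => cycP.
have [y _ bE] := stab_nontrivial_conj aCu bCw a1 b1.
have stab_2elt v c : c \in 'C_G[v | 'P] -> 2.-elt c.
  by move=> cC; apply: pnat_dvd (order_dvdG cC) _; rewrite card_stab2.
have /perm_stabP[aG _] := aCu; have /perm_stabP[bG _] := bCw.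
have oab : #[a] = #[b] by rewrite bE orderJ.
have eqAB : <[a]> = <[b]>.
  by apply: cyclic_Sylow_cycle_eq sylP cycP aG bG _ _ triangle_commute oab;
    [apply: stab_2elt aCu | apply: stab_2elt bCw].
have bCu : b \in 'C_G[u | 'P] by rewrite -cycle_subG -eqAB cycle_subG.
move: ba1; rewrite (card2_nontrivial_eq (card_stab2 u) bCu aCu b1 a1).
by rewrite -{1}(stab_invg aCu) mulVg eqxx.
Qed.

Lemma triangle_not_nilpotent : ~~ nilpotent G.
Proof.
apply/negP => nilG.
have [y yG bE] := stab_nontrivial_conj aCu bCw a1 b1.
have [z zG baE] := stab_nontrivial_conj aCu baCx a1 ba1.
have /perm_stabP[aG _] := aCu.
move/eqP: a1; apply; apply: (nilpotent_commg_conj_eq1 nilG aG yG zG).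
by rewrite commgEl (stab_invg aCu) -bE -baE triangle_commute.
Qed.

End Triangle.

Lemma intersecting_card_le2 F :
  (exists2 P : {group {perm T}}, P \in 'Syl_2(G) & cyclic P) \/ nilpotent G ->
  intersecting G F -> #|F| <= 2.
Proof.
move=> cycS2_or_nilG Fint; rewrite leqNgt.
apply/card_gt2P => -[g [h [k [[gF hF kF] [gh hk kg]]]]].
have [u aCu] := intersecting_divr_stab Fint gF hF.
have [w bCw] := intersecting_divr_stab Fint hF kF.
have [x baCx] : exists x, k * h^-1 * (h * g^-1) \in 'C_G[x | 'P].
  by rewrite mulgA mulgVK; apply: intersecting_divr_stab Fint gF kF.
have divr_neq1 (p q : {perm T}) : p != q -> q * p^-1 != 1 by rewrite -eq_mulgV1 eq_sym.
have a1 := divr_neq1 g h gh; have b1 := divr_neq1 h k hk.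
have ba1 : k * h^-1 * (h * g^-1) != 1 by rewrite mulgA mulgVK divr_neq1 // eq_sym.
case: cycS2_or_nilG => [[P sylP cycP] | nilG].
- by rewrite (negPf (triangle_Sylow2_not_cyclic aCu bCw baCx a1 b1 ba1 sylP)) in cycP.
- by rewrite (negPf (triangle_not_nilpotent aCu bCw baCx a1 b1 ba1)) in nilG.
Qed.

End PermGroup.

Theorem proposition3p2 (T : finType) (G : {group {perm T}}) :
  [transitive G, on [set: T] | 'P] ->
  (forall v : T, #|'C_G[v | 'P]| = 2) ->
  ((exists2 P : {group {perm T}}, P \in 'Syl_2(G) & cyclic P) \/ nilpotent G) ->
  EKR G.
Proof.
move=> transG card_stab2 cycS2_or_nilG; apply: EKR_of_intersecting_le_stab => F v Fint.
by rewrite card_stab2; exact: (intersecting_card_le2 transG card_stab2 cycS2_or_nilG Fint).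
Qed.
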